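(* Let $\widehat M \in \mathbb{R}^{d\times d}$ be symmetric. Fix a unit vector $w\in\mathbb{R}^d$, a scalar $a \in\mathbb{R}$ and $\alpha>0$, and define $\tilde w := (I + \alpha a\widehat M)w$, $w^+ := \tilde w/\|\tilde w\|_2$, $q := w^\top\widehat M w$ and $q^+ := (w^+)^\top\widehat M w^+$. If $\alpha |a|\,\|\widehat M\|_2 \le 1/2$, then $q^+ - q$ is either zero or has the same sign as $a$.
   Context: In the paper $\widehat M = \frac1N\sum_s y^{(s)}x^{(s)}x^{(s)\top}$ is the empirical moment matrix; $\|\cdot\|_2$ denotes the operator norm. *)

From HB Require Import structures.
From mathcomp Require Import all_boot all_order all_algebra.
From mathcomp Require Import classical_sets reals.
Set Implicit Arguments. Unset Strict Implicit. Unset Printing Implicit Defensive.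
Import Order.TTheory GRing.Theory Num.Theory.
Local Open Scope ring_scope.
Local Open Scope classical_set_scope.

Definition norm2 (R : realType) (d : nat) (v : 'cV[R]_d) : R :=
  Num.sqrt (\sum_(i < d) v i 0 ^+ 2).

Definition opnorm (R : realType) (d : nat) (A : 'M[R]_d) : R :=
  sup [set norm2 (A *m v) | v in [set v : 'cV[R]_d | norm2 v = 1]].

Definition quadf (R : realType) (d : nat) (M : 'M[R]_d) (w : 'cV[R]_d) : R :=
  (w^T *m M *m w) 0 0.

From HB Require Import structures.
From mathcomp Require Import all_boot all_order all_algebra.
From mathcomp Require Import classical_sets reals.
From mathcomp Require Import ring lra.
Import Order.TTheory GRing.Theory Num.Theory.
Set Implicit Arguments. Unset Strict Implicit. Unset Printing Implicit Defensive.
Local Open Scope ring_scope.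

(* Put [t = alpha a], [q = w^T M w] and [u = M w - q w], which is orthogonal
   to the unit vector [w]. Expanding [w~ = (1 + t q) w + t u] gives
     |w~|^2 = (1 + t q)^2 + t^2 |u|^2,
     w~^T M w~ - q |w~|^2 = t ((2 + t q) |u|^2 + t u^T M u),
   so [q+ - q = t g / |w~|^2] with [g = (2 + t q) |u|^2 + t u^T M u]. The step
   condition [|t| ||M|| <= 1/2] bounds both [|t q|] and [|t u^T M u| / |u|^2]
   by [1/2]; hence [|w~|^2 > 0] and [g >= |u|^2 >= 0]. *)

Section DotProduct.
Variables (R : comNzRingType) (d : nat).
Implicit Types (x y z : 'cV[R]_d) (M : 'M[R]_d).

Definition dotmx x y : R := (x^T *m y) 0 0.

Lemma dotmxE x y : dotmx x y = \sum_(i < d) x i 0 * y i 0.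
Proof. by rewrite /dotmx mxE; apply: eq_bigr => i _; rewrite mxE. Qed.

Lemma dotmxC x y : dotmx x y = dotmx y x.
Proof. by rewrite !dotmxE; apply: eq_bigr => i _; rewrite mulrC. Qed.

Lemma dotmx0r x : dotmx x 0 = 0.
Proof. by rewrite /dotmx mulmx0 mxE. Qed.

Lemma dotmxDl x y z : dotmx (x + y) z = dotmx x z + dotmx y z.
Proof. by rewrite /dotmx linearD mulmxDl mxE. Qed.

Lemma dotmxZl c x y : dotmx (c *: x) y = c * dotmx x y.
Proof. by rewrite /dotmx linearZ -scalemxAl mxE. Qed.

Lemma dotmxNl x y : dotmx (- x) y = - dotmx x y.
Proof. by rewrite -scaleN1r dotmxZl mulN1r. Qed.

Lemma dotmxDr x y z : dotmx x (y + z) = dotmx x y + dotmx x z.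
Proof. by rewrite dotmxC dotmxDl !(dotmxC x). Qed.

Lemma dotmxZr c x y : dotmx x (c *: y) = c * dotmx x y.
Proof. by rewrite dotmxC dotmxZl dotmxC. Qed.

Lemma dotmxNr x y : dotmx x (- y) = - dotmx x y.
Proof. by rewrite dotmxC dotmxNl dotmxC. Qed.

Lemma dotmx_mulmxl M x y : dotmx (M *m x) y = dotmx x (M^T *m y).
Proof. by rewrite /dotmx trmx_mul mulmxA. Qed.

End DotProduct.

Definition dotmx_lin := (dotmxDl, dotmxDr, dotmxNl, dotmxNr, dotmxZl, dotmxZr).

Section DotProductReal.
Variables (R : realDomainType) (d : nat).
Implicit Types (x y : 'cV[R]_d).

Lemma dotmx_ge0 x : 0 <= dotmx x x.
Proof. by rewrite dotmxE sumr_ge0 // => i _; rewrite -expr2 sqr_ge0. Qed.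

Lemma dotmx_eq0 x : (dotmx x x == 0) = (x == 0).
Proof.
apply/idP/eqP => [|->]; last by rewrite dotmx0r.
rewrite dotmxE psumr_eq0 => [/allP x0|i _]; last by rewrite -expr2 sqr_ge0.
apply/matrixP => i j; rewrite ord1 mxE.
by have := x0 i (mem_index_enum i); rewrite -expr2 sqrf_eq0 => /eqP.
Qed.

Lemma normr_dotmx_le_mean x y : 2 * `|dotmx x y| <= dotmx x x + dotmx y y.
Proof.
have := dotmx_ge0 (x - y); have := dotmx_ge0 (x + y).
rewrite !dotmx_lin (dotmxC y x) => ge0_sum ge0_diff.
by have [z0|z0] := lerP 0 (dotmx x y); [rewrite ger0_norm | rewrite ltr0_norm]; lra.
Qed.

End DotProductReal.

Section EuclideanNorm.
Variables (R : realType) (d : nat).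
Implicit Types (x y : 'cV[R]_d).

Lemma norm2E x : norm2 x = Num.sqrt (dotmx x x).
Proof. by rewrite /norm2 dotmxE; under eq_bigr do rewrite expr2. Qed.

Lemma norm2_ge0 x : 0 <= norm2 x.
Proof. exact: sqrtr_ge0. Qed.

Lemma sqr_norm2 x : norm2 x ^+ 2 = dotmx x x.
Proof. by rewrite norm2E sqr_sqrtr ?dotmx_ge0. Qed.

Lemma norm2_eq0 x : (norm2 x == 0) = (x == 0).
Proof. by rewrite norm2E sqrtr_eq0 -dotmx_eq0 eq_le dotmx_ge0 andbT. Qed.

Lemma norm20 : norm2 (0 : 'cV[R]_d) = 0.
Proof. by apply/eqP; rewrite norm2_eq0. Qed.

Lemma norm2Z c x : norm2 (c *: x) = `|c| * norm2 x.
Proof. by rewrite !norm2E dotmxZl dotmxZr mulrA -expr2 sqrtrM ?sqr_ge0 // sqrtr_sqr. Qed.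

Lemma normr_coord_le_norm2 x i : `|x i 0| <= norm2 x.
Proof.
rewrite -sqrtr_sqr /norm2 ler_sqrt; last by rewrite sumr_ge0 // => j _; rewrite sqr_ge0.
by rewrite (bigD1 i) //= lerDl sumr_ge0 // => j _; rewrite sqr_ge0.
Qed.

Lemma normr_dotmx_le x y : `|dotmx x y| <= norm2 x * norm2 y.
Proof.
have [->|x0] := eqVneq x 0; first by rewrite dotmxC dotmx0r normr0 mulr_ge0 ?norm2_ge0.
have [->|y0] := eqVneq y 0; first by rewrite dotmx0r normr0 mulr_ge0 ?norm2_ge0.
have nx : 0 < norm2 x by rewrite lt_def norm2_eq0 x0 norm2_ge0.
have ny : 0 < norm2 y by rewrite lt_def norm2_eq0 y0 norm2_ge0.
have := normr_dotmx_le_mean (norm2 y *: x) (norm2 x *: y).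
rewrite !(dotmxZl, dotmxZr) -!sqr_norm2 !normrM (gtr0_norm nx) (gtr0_norm ny) => h.
by rewrite -(ler_pM2l (_ : 0 < 2 * norm2 x * norm2 y)) ?mulr_gt0 //; lra.
Qed.

End EuclideanNorm.

Lemma quadfE (R : realType) (d : nat) (M : 'M[R]_d) (v : 'cV[R]_d) :
  quadf M v = dotmx v (M *m v).
Proof. by rewrite /quadf -mulmxA. Qed.

Section OperatorNorm.
Variables (R : realType) (d : nat) (M : 'M[R]_d).
Implicit Types (u v : 'cV[R]_d).

Local Open Scope classical_set_scope.

Lemma opnorm_has_sup u : norm2 u = 1 ->
  has_sup [set norm2 (M *m v) | v in [set v : 'cV[R]_d | norm2 v = 1]].
Proof.
move=> u1; split; first by exists (norm2 (M *m u)), u.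
exists (Num.sqrt (\sum_(i < d) (\sum_(j < d) `|M i j|) ^+ 2)) => _ [v /= v1 <-].
rewrite /norm2 ler_sqrt; last by rewrite sumr_ge0 // => i _; rewrite sqr_ge0.
apply: ler_sum => i _; rewrite -real_normK ?num_real // ler_sqr ?nnegrE ?sumr_ge0 //.
rewrite mxE; apply: le_trans (ler_norm_sum _ _ _) _; apply: ler_sum => j _.
by rewrite normrM ler_piMr // -v1 normr_coord_le_norm2.
Qed.

Lemma norm2_mulmx_le_opnorm u : norm2 u = 1 -> norm2 (M *m u) <= opnorm M.
Proof. by move=> u1; apply: sup_upper_bound (opnorm_has_sup u1) _ _; exists u. Qed.

Local Close Scope classical_set_scope.

Lemma norm2_mulmx_le v : norm2 (M *m v) <= opnorm M * norm2 v.
Proof.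
have [->|v0] := eqVneq v 0; first by rewrite mulmx0 !norm20 mulr0.
have nv : 0 < norm2 v by rewrite lt_def norm2_eq0 v0 norm2_ge0.
have nvV : `|(norm2 v)^-1| = (norm2 v)^-1 by rewrite ger0_norm ?invr_ge0 ?norm2_ge0.
have u1 : norm2 ((norm2 v)^-1 *: v) = 1 by rewrite norm2Z nvV mulVf ?gt_eqF.
have := norm2_mulmx_le_opnorm u1.
by rewrite -scalemxAr norm2Z nvV -ler_pdivlMl ?invr_gt0 // invrK mulrC.
Qed.

Lemma normr_quadf_le v : `|quadf M v| <= opnorm M * norm2 v ^+ 2.
Proof.
rewrite quadfE; apply: le_trans (normr_dotmx_le _ _) _.
by rewrite mulrC expr2 mulrA ler_wpM2r ?norm2_ge0 ?norm2_mulmx_le.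
Qed.

End OperatorNorm.

Lemma quadf_normalize (R : realType) (d : nat) (M : 'M[R]_d) (v : 'cV[R]_d) :
  quadf M ((norm2 v)^-1 *: v) = quadf M v / dotmx v v.
Proof.
by rewrite !quadfE -scalemxAr dotmxZl dotmxZr mulrA -expr2 exprVn sqr_norm2 mulrC.
Qed.

Section NormalizedPowerStep.
Variables (R : realType) (d : nat) (M : 'M[R]_d) (w : 'cV[R]_d) (t : R).
Hypotheses (M_sym : M^T = M) (w_unit : norm2 w = 1).

Local Notation q := (quadf M w).
Local Notation u := (M *m w - q *: w).
Local Notation wt := (w + t *: (M *m w)).
Local Notation gain := ((2 + t * q) * dotmx u u + t * quadf M u).

Let dotmx_mulmx_sym x y : dotmx (M *m x) y = dotmx x (M *m y).
Proof. by rewrite dotmx_mulmxl M_sym. Qed.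

Let dotmx_ww : dotmx w w = 1.
Proof. by rewrite -sqr_norm2 w_unit expr1n. Qed.

Lemma dotmx_step : dotmx wt wt = (1 + t * q) ^+ 2 + t ^+ 2 * dotmx u u.
Proof.
by rewrite !quadfE !dotmx_lin !dotmx_mulmx_sym dotmx_ww; ring.
Qed.

Lemma quadf_step : quadf M wt - q * dotmx wt wt = t * gain.
Proof.
rewrite !quadfE !(mulmxDr, mulmxBr, mulmxN) -!scalemxAr.
by rewrite !dotmx_lin !dotmx_mulmx_sym dotmx_ww; ring.
Qed.

Hypothesis small_step : `|t| * opnorm M <= 1 / 2.

Let normr_tq : `|t * q| <= 1 / 2.
Proof.
rewrite normrM; apply: le_trans small_step.
by rewrite ler_wpM2l // -[opnorm M]mulr1 -(expr1n _ 2) -w_unit normr_quadf_le.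
Qed.

Lemma dotmx_step_gt0 : 0 < dotmx wt wt.
Proof.
rewrite dotmx_step; have := mulr_ge0 (sqr_ge0 t) (dotmx_ge0 u).
by move: normr_tq; rewrite ler_norml => /andP[]; nra.
Qed.

Lemma quadf_step_gain_ge : dotmx u u <= gain.
Proof.
have tuMu : `|t * quadf M u| <= dotmx u u / 2.
  rewrite normrM; apply: le_trans (ler_wpM2l (normr_ge0 t) (normr_quadf_le _ _)) _.
  by rewrite sqr_norm2 mulrA; have := ler_wpM2r (dotmx_ge0 u) small_step; lra.
have := dotmx_ge0 u.
by move: tuMu normr_tq; rewrite !ler_norml => /andP[? ?] /andP[? ?]; nra.
Qed.

Lemma quadf_normalized_step :
  quadf M ((norm2 wt)^-1 *: wt) - q = 0 \/
  Num.sg (quadf M ((norm2 wt)^-1 *: wt) - q) = Num.sg t.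
Proof.
have N0 := dotmx_step_gt0.
have -> : quadf M ((norm2 wt)^-1 *: wt) - q = t * (gain / dotmx wt wt).
  by rewrite quadf_normalize mulrA -quadf_step mulrBl mulfK ?gt_eqF.
have gain_ge0 := le_trans (dotmx_ge0 u) quadf_step_gain_ge.
have [->|gain_neq0] := eqVneq gain 0.
  by left; rewrite mul0r mulr0.
have gain_gt0 : 0 < gain / dotmx wt wt.
  by rewrite divr_gt0 // lt_def gain_neq0.
by right; rewrite sgrM (gtr0_sg gain_gt0) mulr1.
Qed.

End NormalizedPowerStep.

Theorem lemma6 (R : realType) (d : nat) (M : 'M[R]_d) (w : 'cV[R]_d)
    (a alpha : R) :
  M^T = M ->
  norm2 w = 1 ->
  0 < alpha ->
  alpha * `|a| * opnorm M <= 1 / 2 ->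
  let wt := (1%:M + (alpha * a) *: M) *m w in
  let wp := (norm2 wt)^-1 *: wt in
  let q := quadf M w in
  let qp := quadf M wp in
  qp - q = 0 \/ Num.sg (qp - q) = Num.sg a.
Proof.
move=> M_sym w_unit alpha_gt0 small_step wt wp q qp; rewrite /qp /wp /q.
have -> : wt = w + (alpha * a) *: (M *m w) by rewrite /wt mulmxDl mul1mx -scalemxAl.
have step_bound : `|alpha * a| * opnorm M <= 1 / 2.
  by rewrite normrM (gtr0_norm alpha_gt0).
by rewrite -[Num.sg a]mul1r -(gtr0_sg alpha_gt0) -sgrM; exact: quadf_normalized_step.
Qed.
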